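(* Let $\Sigma\subseteq\Delta\subseteq\mathcal L_{\Diamond\forall}$ with $\Sigma$ finite and both closed under subformulas. Let $\mathfrak W=(W,\preccurlyeq_W,\ell_W)$ be a finite $\Sigma$-labelled frame and $\mathfrak X=(X,\preccurlyeq_X,\ell_X)$ a $\Delta$-labelled frame, and let $w\in W$, $x\in X$. Then: (1) if $\mathrm{Sim}(w)\in\ell_X^-(x)$, then there is $y\succcurlyeq_X x$ such that $(\mathfrak W,w)\rightharpoonup(\mathfrak X,y)$; (2) if there is $y\succcurlyeq_X x$ such that $(\mathfrak W,w)\rightharpoonup(\mathfrak X,y)$, then $\mathrm{Sim}(w)\notin\ell_X^+(x)$.
   Context: $\mathcal L_{\Diamond\forall}$: formulas $\varphi::=\bot\mid p\mid\varphi\wedge\varphi\mid\varphi\vee\varphi\mid\varphi\to\varphi\mid\circ\varphi\mid\Diamond\varphi\mid\forall\varphi$, $p$ ranging over propositional variables; $\top:=\bot\to\bot$, $\bigwedge\varnothing=\top$, $\bigvee\varnothing=\bot$. For $\Sigma$ closed under subformulas, a (two-sided) $\Sigma$-type is a pair $\Phi=(\Phi^+,\Phi^-)$ of finite subsets of $\Sigma$ such that: (1) $\Phi^-\cap\Phi^+=\varnothing$; (2) $\bot\notin\Phi^+$; (3) $\varphi\wedge\psi\in\Phi^+\Rightarrow\varphi,\psi\in\Phi^+$; (4) $\varphi\wedge\psi\in\Phi^-\Rightarrow\varphi\in\Phi^-$ or $\psi\in\Phi^-$; (5) $\varphi\vee\psi\in\Phi^+\Rightarrow\varphi\in\Phi^+$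 or $\psi\in\Phi^+$; (6) $\varphi\vee\psi\in\Phi^-\Rightarrow\varphi,\psi\in\Phi^-$; (7) $\varphi\to\psi\in\Phi^+\Rightarrow\varphi\in\Phi^-$ or $\psi\in\Phi^+$; (8) $\varphi\to\psi\in\Phi^-\Rightarrow\psi\in\Phi^-$; (9) $\Diamond\varphi\in\Phi^-\Rightarrow\varphi\in\Phi^-$. Write $\Phi\preccurlyeq_T\Psi$ if $\Phi^+\subseteq\Psi^+$ and $\Psi^-\subseteq\Phi^-$, and $\Phi\subseteq_T\Psi$ if $\Phi^+\subseteq\Psi^+$ and $\Phi^-\subseteq\Psi^-$. A $\Sigma$-labelled frame is $(W,\preccurlyeq,\ell)$ with $\preccurlyeq$ a partial order on $W$ and $\ell$ mapping each $w$ to a $\Sigma$-type $\ell(w)=(\ell^+(w),\ell^-(w))$ such that $w\preccurlyeq v$ implies $\ell(w)\preccurlyeq_T\ell(v)$, and whenever $\varphi\to\psi\in\ell^-(w)$ there is $v\succcurlyeq w$ with $\varphi\in\ell^+(v)$ and $\psi\in\ell^-(v)$. A simulation from a $\Sigma$-labelled frame $\mathfrak W$ to a $\Delta$-labelled frame $\mathfrak X$ is a relation $E\subseteq W\times X$ that is forward confluent (if $w\mathrel E y$ and $w\preccurlyeq w'$ then there is $y'\succcurlyeq y$ with $w'\mathrel E y'$) and such that $w\mathrel Ey$ implies $\ell_W(w)\subseteq_T\ell_X(y)$; $(\mathfrak W,w)\rightharpoonup(\mathfrak X,y)$ means some simulation $E$ has $w\mathrel Ey$. For finite $\mathfrak W$,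 $\mathrm{Sim}(w)$ is defined by backward induction on $\preccurlyeq_W$: $\mathrm{Sim}(w)=\bigwedge\ell_W^+(w)\to\bigvee\ell_W^-(w)\vee\bigvee_{v\succ w}\mathrm{Sim}(v)$, where $v\succ w$ means $w\preccurlyeq v$ and $v\neq w$. *)

From mathcomp Require Import all_boot.
From Stdlib Require List.
Set Implicit Arguments. Unset Strict Implicit. Unset Printing Implicit Defensive.

Inductive formula : Type :=
  | Bot : formula
  | Var : nat -> formula
  | And : formula -> formula -> formula
  | Or  : formula -> formula -> formula
  | Imp : formula -> formula -> formula
  | Next : formula -> formula
  | Dia : formula -> formula
  | All : formula -> formula.

Definition Top : formula := Imp Bot Bot.

Fixpoint bigwedge (s : seq formula) : formula :=
  match s with
  | [::] => Top
  | [:: a] => a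
  | a :: s' => And a (bigwedge s')
  end.

Fixpoint bigvee (s : seq formula) : formula :=
  match s with
  | [::] => Bot
  | [:: a] => a
  | a :: s' => Or a (bigvee s')
  end.

Definition subformula_closed (S : formula -> Prop) : Prop :=
  forall f, S f ->
    match f with
    | And a b | Or a b | Imp a b => S a /\ S b
    | Next a | Dia a | All a => S a
    | _ => True
    end.

Definition finite_fset (S : formula -> Prop) : Prop :=
  exists l : seq formula, forall f, S f <-> List.In f l.

(* A two-sided type: finite subsets (given as lists) (Phi+, Phi-) of S. *)
Definition ftype := (seq formula * seq formula)%type.

Definition is_type (S : formula -> Prop) (P : ftype) : Prop :=
  let (pos, neg) := P in
  (forall f, List.In f pos -> S f) /\
  (forall f, List.In f neg -> S f) /\
  (forall f, List.In f neg -> List.In f pos -> False) /\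
  ~ List.In Bot pos /\
  (forall a b, List.In (And a b) pos -> List.In a pos /\ List.In b pos) /\
  (forall a b, List.In (And a b) neg -> List.In a neg \/ List.In b neg) /\
  (forall a b, List.In (Or a b) pos -> List.In a pos \/ List.In b pos) /\
  (forall a b, List.In (Or a b) neg -> List.In a neg /\ List.In b neg) /\
  (forall a b, List.In (Imp a b) pos -> List.In a neg \/ List.In b pos) /\
  (forall a b, List.In (Imp a b) neg -> List.In b neg) /\
  (forall a, List.In (Dia a) neg -> List.In a neg).

Definition type_le (P Q : ftype) : Prop :=
  (forall f, List.In f P.1 -> List.In f Q.1) /\
  (forall f, List.In f Q.2 -> List.In f P.2).

Definition type_sub (P Q : ftype) : Prop :=
  (forall f, List.In f P.1 -> List.In f Q.1) /\
  (forall f, List.In f P.2 -> List.In f Q.2).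

Definition partial_order (T : Type) (le : T -> T -> Prop) : Prop :=
  (forall x, le x x) /\
  (forall x y z, le x y -> le y z -> le x z) /\
  (forall x y, le x y -> le y x -> x = y).

Definition labelled_frame (S : formula -> Prop) (T : Type)
    (le : T -> T -> Prop) (lab : T -> ftype) : Prop :=
  partial_order le /\
  (forall w, is_type S (lab w)) /\
  (forall w v, le w v -> type_le (lab w) (lab v)) /\
  (forall w a b, List.In (Imp a b) (lab w).2 ->
     exists v, le w v /\ List.In a (lab v).1 /\ List.In b (lab v).2).

Definition simulation (W X : Type) (leW : W -> W -> Prop) (labW : W -> ftype)
    (leX : X -> X -> Prop) (labX : X -> ftype) (E : W -> X -> Prop) : Prop :=
  (forall w y w', E w y -> leW w w' -> exists y', leX y y' /\ E w' y') /\
  (forall w y, E w y -> type_sub (labW w) (labX y)).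

Definition simulates (W X : Type) (leW : W -> W -> Prop) (labW : W -> ftype)
    (leX : X -> X -> Prop) (labX : X -> ftype) (w : W) (y : X) : Prop :=
  exists E, simulation leW labW leX labX E /\ E w y.

(* Sim(w), by backward induction on a finite poset, implemented with fuel
   #|W| (which exceeds the length of any strict chain). *)
Fixpoint Sim_fuel (W : finType) (leW : rel W) (labW : W -> ftype)
    (n : nat) (w : W) : formula :=
  match n with
  | 0 => Bot
  | n'.+1 =>
      Imp (bigwedge (labW w).1)
          (Or (bigvee (labW w).2)
              (bigvee [seq Sim_fuel leW labW n' v
                      | v <- enum W & leW w v && (v != w)]))
  end.

Definition Sim (W : finType) (leW : rel W) (labW : W -> ftype) (w : W)
  : formula := Sim_fuel leW labW #|W| w.

From mathcomp Require Import all_boot.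
From Stdlib Require List.
Import List (In).
Set Implicit Arguments.
Unset Strict Implicit.
Unset Printing Implicit Defensive.

(* Refuting [Sim w = /\ l+(w) -> \/ l-(w) \/ \/_{v > w} Sim v] at x yields
   y >= x where the label of w holds and every [Sim v], v > w, is refuted;
   by induction on the size of the up-set of w each such v is simulated at
   some point above y, and adding the pair (w, y) to the union of all
   simulations gives a simulation.  Conversely, if w is simulated at y >= x
   and [Sim w] held at x, it would hold at y, so either a conjunct of l+(w)
   fails at y, or a formula of l-(w) holds at y, or [Sim v] holds at y for
   some v > w; the first two contradict l(w) <=_T l(y) and the third
   contradicts the induction hypothesis at the point simulating v. *)

Section TypeFacts.

Variables (S : formula -> Prop) (P : ftype).
Hypothesis typeP : is_type S P.

Lemma type_disjoint f : In f P.2 -> In f P.1 -> False.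
Proof. by case: P typeP => pos neg [_ [_ [H _]]]; exact: H. Qed.

Lemma type_Bot_not_pos : ~ In Bot P.1.
Proof. by case: P typeP => pos neg [_ [_ [_ [H _]]]]. Qed.

Lemma type_And_pos a b : In (And a b) P.1 -> In a P.1 /\ In b P.1.
Proof. by case: P typeP => pos neg [_ [_ [_ [_ [H _]]]]]; exact: H. Qed.

Lemma type_And_neg a b : In (And a b) P.2 -> In a P.2 \/ In b P.2.
Proof. by case: P typeP => pos neg [_ [_ [_ [_ [_ [H _]]]]]]; exact: H. Qed.

Lemma type_Or_pos a b : In (Or a b) P.1 -> In a P.1 \/ In b P.1.
Proof. by case: P typeP => pos neg [_ [_ [_ [_ [_ [_ [H _]]]]]]]; exact: H. Qed.

Lemma type_Or_neg a b : In (Or a b) P.2 -> In a P.2 /\ In b P.2.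
Proof. by case: P typeP => pos neg [_ [_ [_ [_ [_ [_ [_ [H _]]]]]]]]; exact: H. Qed.

Lemma type_Imp_pos a b : In (Imp a b) P.1 -> In a P.2 \/ In b P.1.
Proof. by case: P typeP => pos neg [_ [_ [_ [_ [_ [_ [_ [_ [H _]]]]]]]]]; exact: H. Qed.

Lemma type_bigwedge_pos s : In (bigwedge s) P.1 -> forall a, In a s -> In a P.1.
Proof.
elim: s => [|a [|b s] IH] //= Hs c; first by case=> [<-|[]].
by case/type_And_pos: Hs => Ha Hs [<-|Hc] //; apply: IH.
Qed.

Lemma type_bigvee_neg s : In (bigvee s) P.2 -> forall a, In a s -> In a P.2.
Proof.
elim: s => [|a [|b s] IH] //= Hs c; first by case=> [<-|[]].
by case/type_Or_neg: Hs => Ha Hs [<-|Hc] //; apply: IH.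
Qed.

Lemma type_bigvee_pos s : In (bigvee s) P.1 -> exists2 a, In a s & In a P.1.
Proof.
elim: s => [|a [|b s] IH] /=; first by move/type_Bot_not_pos.
  by exists a; first left.
case/type_Or_pos => [Ha|/IH [c Hc Hc']]; first by exists a; first left.
by exists c; first right.
Qed.

Lemma type_bigwedge_neg s :
  ~ In Top P.2 -> (forall a, In a s -> In a P.1) -> ~ In (bigwedge s) P.2.
Proof.
move=> Htop; elim: s => [|a [|b s] IH] //= Hs.
  by move=> Ha; apply: type_disjoint Ha _; apply: Hs; left.
case/type_And_neg => [Ha|]; first by apply: type_disjoint Ha _; apply: Hs; left.
by apply: IH => c Hc; apply: Hs; right.
Qed.

End TypeFacts.

Lemma frame_Top_not_neg S T (le : T -> T -> Prop) lab t :
  labelled_frame S le lab -> ~ In Top (lab t).2.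
Proof.
move=> [_ [Hty [_ Himp]]] /Himp [u [_ [Hbot _]]].
exact: type_Bot_not_pos (Hty u) Hbot.
Qed.

Section Simulations.

Variables (W : eqType) (X : Type) (leW : W -> W -> Prop) (labW : W -> ftype).
Variables (leX : X -> X -> Prop) (labX : X -> ftype).

Local Notation sim := (simulates leW labW leX labX).

Lemma simulates_type_sub w y : sim w y -> type_sub (labW w) (labX y).
Proof. by case=> E [[_ Elab] Ewy]; apply: Elab. Qed.

Lemma simulates_forward w y w' :
  sim w y -> leW w w' -> exists2 y', leX y y' & sim w' y'.
Proof.
case=> E [[Efwd Elab] Ewy] /(Efwd _ _ _ Ewy) [y' [Hyy' Ey']].
by exists y'; last by exists E.
Qed.

(* The witnessing relation is the union of all simulations and {(w, y)}. *)
Lemma simulates_intro w y :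
  leX y y -> type_sub (labW w) (labX y) ->
  (forall w', leW w w' -> w' != w -> exists2 y', leX y y' & sim w' y') ->
  sim w y.
Proof.
move=> Hyy Hsub Hsucc; exists (fun a b => (a = w /\ b = y) \/ sim a b).
split; last by left.
split=> [a b a' [[-> ->]|Hab] Haa'|a b [[-> ->]|/simulates_type_sub] //].
- have [->|Hne] := eqVneq a' w; first by exists y; split=> //; left.
  by have [y' Hyy' Hy'] := Hsucc _ Haa' Hne; exists y'; split=> //; right.
- by have [b' Hbb' Hb'] := simulates_forward Hab Haa'; exists b'; split=> //; right.
Qed.

End Simulations.

Lemma In_map_filter (T : eqType) (A : Type) (g : T -> A) (p : pred T) s a :
  In a [seq g x | x <- s & p x] <-> exists2 x, (x \in s) && p x & a = g x.
Proof.
elim: s a => [|x s IH] a /=; first by split=> // -[].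
case px: (p x) => /=.
- split=> [[<-|/IH [y /andP [Hy py] ->]]|[y]].
  + by exists x; rewrite ?inE ?eqxx ?px.
  + by exists y; rewrite ?inE ?Hy ?orbT.
  rewrite inE => /andP [/orP [/eqP ->|Hy] py] ->; first by left.
  by right; apply/IH; exists y; rewrite ?Hy.
- rewrite IH; split=> -[y /andP [Hy py] ->]; exists y => //.
    by rewrite inE Hy orbT.
  by move: Hy py; rewrite inE => /orP [/eqP ->|->]; rewrite ?px.
Qed.

Section FiniteFrame.

Variables (W : finType) (leW : rel W) (labW : W -> ftype).

Local Notation upset v := [pred u | leW v u].

Lemma card_upset_strict_lt :
  partial_order (fun a b => leW a b) ->
  forall v u, leW v u -> u != v -> #|upset u| < #|upset v|.
Proof.
move=> [le_refl [le_trans le_anti]] v u Hvu Huv.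
apply: proper_card; apply/properP; split.
  by apply/subsetP => z; rewrite !inE; apply: le_trans.
exists v; rewrite !inE ?le_refl //; apply: contraNN Huv => Huv.
exact/eqP/le_anti.
Qed.

Lemma In_Sim_succs n v f :
  In f [seq Sim_fuel leW labW n u | u <- enum W & leW v u && (u != v)] ->
  exists2 u, leW v u && (u != v) & f = Sim_fuel leW labW n u.
Proof. by case/In_map_filter=> u; rewrite mem_enum => Hu ->; exists u. Qed.

Lemma Sim_succs_In n v u :
  leW v u -> u != v ->
  In (Sim_fuel leW labW n u)
     [seq Sim_fuel leW labW n u | u <- enum W & leW v u && (u != v)].
Proof. by move=> Hvu Huv; apply/In_map_filter; exists u; rewrite ?mem_enum ?Hvu. Qed.

Variables (Del : formula -> Prop) (X : Type) (leX : X -> X -> Prop) (labX : X -> ftype).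
Hypothesis frameX : labelled_frame Del leX labX.

Local Notation sim := (simulates (fun a b => leW a b) labW leX labX).

Lemma Sim_fuel_neg_simulates n v x :
  partial_order (fun a b => leW a b) -> #|upset v| <= n ->
  In (Sim_fuel leW labW n v) (labX x).2 -> exists y, leX x y /\ sim v y.
Proof.
move=> orderW; have [le_refl _] := orderW.
have [[leX_refl _] [typeX [_ frameX_Imp]]] := frameX.
elim: n v x => [|n IH] v x Hcard.
  have Hv : v \in upset v by rewrite inE le_refl.
  by move: Hcard; rewrite leqn0 => /eqP/card0_eq/(_ v); rewrite Hv.
move=> /= /frameX_Imp [y [Hxy [Hpos /(type_Or_neg (typeX y)) [Hneg Hsuccs]]]].
exists y; split=> //; apply: simulates_intro; first exact: leX_refl.
  split=> f Hf; first exact: (type_bigwedge_pos (typeX y) Hpos Hf).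
  exact: (type_bigvee_neg (typeX y) Hneg Hf).
move=> u Hvu Huv.
have Hu : In (Sim_fuel leW labW n u) (labX y).2.
  exact: (type_bigvee_neg (typeX y) Hsuccs (Sim_succs_In n Hvu Huv)).
have [y' [Hyy' Hy']] := IH u y (leq_trans (card_upset_strict_lt orderW Hvu Huv) Hcard) Hu.
by exists y'.
Qed.

(* Unlike the previous lemma, this needs no bound on the fuel. *)
Lemma simulates_Sim_fuel_not_pos n v y :
  sim v y -> ~ In (Sim_fuel leW labW n v) (labX y).1.
Proof.
have [_ [typeX [monX _]]] := frameX.
elim: n v y => [|n IH] v y Hsim /=; first exact: type_Bot_not_pos.
have [Hsub_pos Hsub_neg] := simulates_type_sub Hsim.
case/(type_Imp_pos (typeX y)) => [Hpos|/(type_Or_pos (typeX y)) [Hneg|Hsuccs]].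
- exact: (type_bigwedge_neg (typeX y) (frame_Top_not_neg frameX) Hsub_pos Hpos).
- have [a Ha Ha'] := type_bigvee_pos (typeX y) Hneg.
  exact: (type_disjoint (typeX y) (Hsub_neg _ Ha) Ha').
- have [_ /In_Sim_succs [u /andP [Hvu _] ->] Hu] := type_bigvee_pos (typeX y) Hsuccs.
  have [y' Hyy' Hy'] := simulates_forward Hsim Hvu.
  exact: IH Hy' (proj1 (monX _ _ Hyy') _ Hu).
Qed.

End FiniteFrame.

Theorem proposition6p4
  (Sig Del : formula -> Prop)
  (HSD : forall f, Sig f -> Del f)
  (HSfin : finite_fset Sig)
  (HSclo : subformula_closed Sig)
  (HDclo : subformula_closed Del)
  (W : finType) (leW : rel W) (labW : W -> ftype)
  (HW : labelled_frame Sig (fun a b => leW a b) labW)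
  (X : Type) (leX : X -> X -> Prop) (labX : X -> ftype)
  (HX : labelled_frame Del leX labX)
  (w : W) (x : X) :
  (List.In (Sim leW labW w) (labX x).2 ->
     exists y, leX x y /\ simulates (fun a b => leW a b) labW leX labX w y) /\
  ((exists y, leX x y /\ simulates (fun a b => leW a b) labW leX labX w y) ->
     ~ List.In (Sim leW labW w) (labX x).1).
Proof.
have [orderW _] := HW; have [_ [_ [monX _]]] := HX.
split; first exact: Sim_fuel_neg_simulates HX _ _ _ orderW (max_card _).
move=> [y [Hxy Hsim]] /(proj1 (monX _ _ Hxy)).
exact: simulates_Sim_fuel_not_pos HX _ _ _ Hsim.
Qed.
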